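(* For every integer $n\geq 1$, \[ \sum_{\sigma\in\mathcal{Q}_n} q^{\operatorname{lrmin}(\sigma)} x^{\operatorname{ap}(\sigma)} y^{\operatorname{even}(\sigma)}= \sum_{\pi\in \overline{\mathfrak{S}}_n}q^{\operatorname{lrmin}(\pi)} x^{\operatorname{asc}(\pi)} y^{\operatorname{mark}(\pi)}. \]
   Context: Let $[n]_2$ be the multiset $\{1,1,2,2,\dots,n,n\}$. A Stirling permutation of order $n$ is a permutation $\sigma=\sigma_1\cdots\sigma_{2n}$ of $[n]_2$ such that for each $i\in[n]$ every entry between the two occurrences of $i$ is greater than $i$; $\mathcal{Q}_n$ denotes the set of these. An ascent plateau of $\sigma\in\mathcal{Q}_n$ is an entry $\sigma_i$ with $2\le i\le 2n-1$ and $\sigma_{i-1}<\sigma_i=\sigma_{i+1}$; $\operatorname{ap}(\sigma)$ is the number of ascent plateaux. An entry $k$ of $\sigma$ is even indexed if the first occurrence of $k$ is at an even position of $\sigma$; $\operatorname{even}(\sigma)$ is the number of even indexed entries (each value $k\in[n]$ counted once). For a word $w=w_1\cdots w_m$, a left-to-right minimum is an entry $w_i$ with $i=1$ or $w_i<w_j$ for all $j<i$; $\operatorname{lrmin}(w)$ is the number of distinct values that are left-to-right minima (for Stirling permutations this is the number of values $k$ some occurrence of which is a left-to-right minimum). A marked permutation of $[n]$ is a permutation $\pi=\pi_1\cdots\pi_n$ of $[n]$ together with a choice of marks on some (possibly none) of its entries that are not left-to-right minima; left-to-right minima are never marked. $\overline{\mathfrak{S}}_n$ is the set of marked permutations of $[n]$.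 For $\pi\in\overline{\mathfrak{S}}_n$, $\operatorname{mark}(\pi)$ is the number of marked entries, and $\operatorname{lrmin}(\pi)$ and $\operatorname{asc}(\pi)$ are computed ignoring marks, where $\operatorname{asc}(\pi)$ is the number of indices $i\in\{2,\dots,n\}$ with $\pi_i>\pi_{i-1}$. *)

From mathcomp Require Import all_boot all_order all_algebra.
Set Implicit Arguments. Unset Strict Implicit. Unset Printing Implicit Defensive.

(* Words are seq nat, positions are 0-based internally (position i here is
   position i+1 in the paper). *)

Definition multiset2 (n : nat) : seq nat := flatten [seq [:: i; i] | i <- iota 1 n].

Definition stirling_cond (s : seq nat) : bool :=
  [forall j : 'I_(size s), forall l : 'I_(size s),
     ((j < l) && (nth 0 s j == nth 0 s l)) ==>
     all (fun k => nth 0 s j < nth 0 s k) (iota j.+1 (l - j.+1))].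

Definition stirling_perms (n : nat) : seq (seq nat) :=
  [seq s <- permutations (multiset2 n) | stirling_cond s].

(* ap: 1-based positions 2..size-1, i.e. 0-based 1..size-2. *)
Definition ap (s : seq nat) : nat :=
  count (fun i => (nth 0 s i.-1 < nth 0 s i) && (nth 0 s i == nth 0 s i.+1))
        (iota 1 (size s).-2).

(* even: values k in [n] whose first occurrence is at an even (1-based)
   position, i.e. at an odd 0-based index. *)
Definition even_idx (n : nat) (s : seq nat) : nat :=
  count (fun k => odd (index k s)) (iota 1 n).

Definition lrmin_pos (s : seq nat) (i : nat) : bool :=
  all (fun j => nth 0 s i < nth 0 s j) (iota 0 i).

Definition lrmin (s : seq nat) : nat :=
  count (fun v => has (fun i => (nth 0 s i == v) && lrmin_pos s i) (iota 0 (size s)))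
        (undup s).

(* asc: 1-based indices 2..n with pi_i > pi_{i-1}. *)
Definition asc (s : seq nat) : nat :=
  count (fun i => nth 0 s i.-1 < nth 0 s i) (iota 1 (size s).-1).

(* A marked permutation of [n] is a pair (p, M) with p a permutation of
   1..n (an element of permutations (iota 1 n)) and M : {set 'I_n} the set of
   (0-based) positions of marked entries, none of which is a left-to-right
   minimum. *)
Definition valid_marks (n : nat) (p : seq nat) (M : {set 'I_n}) : bool :=
  [forall i in M, ~~ lrmin_pos p i].

From mathcomp Require Import all_boot all_order all_algebra.
From mathcomp Require Import zify ring.
Import GRing.Theory.
Set Implicit Arguments. Unset Strict Implicit. Unset Printing Implicit Defensive.

(* Both sides satisfy the same recursion in n once the weight
   q^lrmin x^asc y^e is generalised to an arbitrary f(lrmin, asc, e).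
   A Stirling permutation of order n+1 arises uniquely by inserting the block
   (n+1)(n+1) into one of the 2n+1 slots of one of order n. Slot 0 adds a
   left-to-right minimum; any other slot i keeps lrmin, makes n+1 even indexed
   iff i is odd (the other first occurrences move by 0 or 2), and raises ap
   unless it borders a plateau. Plateaux are never adjacent, so ap(s) odd and
   ap(s) even slots border one and n - ap(s) of each parity do not.
   Likewise a permutation of order n+1 arises from one of order n by inserting
   n+1 into one of n+1 slots: slot 0 adds a left-to-right minimum, every other
   slot adds a markable entry and keeps asc iff it falls inside an ascent.
   Summing over the marks turns y^mark into a binomial transform, whose Pascal
   rule reproduces the pairs of slots of opposite parity on the Stirling side. *)

Lemma count_iota_shift (P Q : pred nat) a d L :
  (forall q, a <= q < a + L -> P (q + d) = Q q) ->
  count P (iota (a + d) L) = count Q (iota a L).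
Proof.
move=> PQ; rewrite [a + d]addnC iotaDl count_map; apply: eq_in_count => q.
by rewrite mem_iota /= => q_range; rewrite addnC; apply: PQ.
Qed.

Lemma count_iota_window (P : pred nat) a L K : a + L <= K ->
  (forall q, q < K -> ~~ (a <= q < a + L) -> ~~ P q) ->
  count P (iota 0 K) = count P (iota a L).
Proof.
move=> aL_le P_out.
rewrite -(subnKC aL_le) -[in iota 0 _](addnA) iotaD iotaD !count_cat.
rewrite (@eq_in_count _ _ pred0 (iota 0 a)) => [|q]; last first.
  by rewrite mem_iota => q_a; apply/negbTE/P_out; lia.
rewrite (@eq_in_count _ _ pred0 (iota (0 + (a + L)) _)) => [|q]; last first.
  by rewrite mem_iota => q_a; apply/negbTE/P_out; lia.
by rewrite !count_pred0 add0n addn0.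
Qed.

Lemma count_iota_neq0 a k : count (fun q => q != 0) (iota a k) = k - (a == 0).
Proof.
change (count (predC (pred1 0)) (iota a k) = k - (a == 0)).
have := count_predC (pred1 0) (iota a k).
rewrite size_iota count_uniq_mem ?iota_uniq // mem_iota.
by case: a => [|a] /=; lia.
Qed.

Lemma count_iota2 (Q : pred nat) a : count Q (iota a 2) = Q a + Q a.+1.
Proof. by rewrite /= addn0. Qed.

Lemma count_odd_iota k : count odd (iota 1 (2 * k)) = k.
Proof.
elim: k => [|k IH] //; rewrite mulnS addnC iotaD count_cat IH count_iota2.
by rewrite add1n oddS oddM /=; lia.
Qed.

Lemma count_and_split (a b : pred nat) r :
  count (fun i => a i && b i) r + count (fun i => ~~ a i && b i) r = count b r.
Proof. by elim: r => //= x r <-; case: (a x); case: (b x) => /=; lia. Qed.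

Lemma iota_rcons a n : iota a n.+1 = rcons (iota a n) (a + n).
Proof. by rewrite -cats1 -[[:: a + n]]/(iota (a + n) 1) -iotaD addn1. Qed.

(** * Inserting a block of equal entries *)

Definition ins_block (k m i : nat) (s : seq nat) := take i s ++ nseq k m ++ drop i s.

Definition shift_past (i k q : nat) := if q < i then q else q + k.

Lemma perm_ins_block k m i s : perm_eq (ins_block k m i s) (s ++ nseq k m).
Proof. by rewrite /ins_block perm_catCA perm_sym perm_catC cat_take_drop. Qed.

Lemma mem_ins_block k m i s : 0 < k -> ins_block k m i s =i m :: s.
Proof.
move=> k_gt0 v; rewrite (perm_mem (perm_ins_block k m i s)) mem_cat inE mem_nseq k_gt0.
by rewrite orbC.
Qed.

Section InsBlock.
Variables (k m i : nat) (s : seq nat).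
Hypothesis i_le : i <= size s.

Lemma size_ins_block : size (ins_block k m i s) = size s + k.
Proof. rewrite /ins_block !size_cat size_takel // size_nseq size_drop; lia. Qed.

Lemma nth_ins_block q : nth 0 (ins_block k m i s) q =
  if q < i then nth 0 s q else if q < i + k then m else nth 0 s (q - k).
Proof.
rewrite /ins_block nth_cat size_takel //.
case: ltnP => q_i; first by rewrite nth_take.
rewrite nth_cat size_nseq; case: ltnP => q_ik.
  by rewrite nth_nseq q_ik ifT //; lia.
rewrite ifF; last lia.
rewrite nth_drop; congr nth; lia.
Qed.

Lemma nth_ins_block_before q : q < i -> nth 0 (ins_block k m i s) q = nth 0 s q.
Proof. by move=> q_i; rewrite nth_ins_block q_i. Qed.

Lemma nth_ins_block_inside q : i <= q < i + k -> nth 0 (ins_block k m i s) q = m.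
Proof. by move=> /andP[i_q q_ik]; rewrite nth_ins_block q_ik ifF //; lia. Qed.

Lemma nth_ins_block_after q : i + k <= q -> nth 0 (ins_block k m i s) q = nth 0 s (q - k).
Proof. by move=> ik_q; rewrite nth_ins_block !ifF //; lia. Qed.

Lemma nth_ins_block_shift q : nth 0 (ins_block k m i s) (shift_past i k q) = nth 0 s q.
Proof.
rewrite /shift_past; case: ltnP => q_i; first exact: nth_ins_block_before.
by rewrite nth_ins_block_after ?addnK //; lia.
Qed.

Lemma ins_block_cases q : q < size s + k ->
  i <= q < i + k \/ exists2 p, p < size s & q = shift_past i k p.
Proof.
move=> q_lt; case: (ltnP q i) => q_i.
  by right; exists q; rewrite /shift_past ?q_i //; lia.
case: (ltnP q (i + k)) => q_ik; first by left; lia.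
by right; exists (q - k); rewrite /shift_past ?ifF; lia.
Qed.

Lemma ins_blockK : take i (ins_block k m i s) ++ drop (i + k) (ins_block k m i s) = s.
Proof.
have size_take_i : size (take i s) = i by rewrite size_takel.
rewrite /ins_block take_size_cat // addnC -drop_drop drop_size_cat //.
by rewrite drop_size_cat ?size_nseq // cat_take_drop.
Qed.

End InsBlock.

Lemma index_ins_block k m i s : 0 < k -> m \notin s -> i <= size s ->
  index m (ins_block k m i s) = i.
Proof.
move=> k_gt0 m_s i_le; rewrite /ins_block index_cat ifF; last first.
  by apply/negP => /mem_take; apply/negP.
rewrite size_takel // index_cat mem_nseq k_gt0 eqxx /=.
by case: k k_gt0 => //= k _; rewrite eqxx addn0.
Qed.

Lemma ins_block_inj k m i j s s' : 0 < k -> m \notin s -> m \notin s' ->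
  i <= size s -> j <= size s' -> ins_block k m i s = ins_block k m j s' -> i = j /\ s = s'.
Proof.
move=> k_gt0 m_s m_s' i_le j_le e.
have ij : i = j by rewrite -(index_ins_block k_gt0 m_s i_le) e index_ins_block.
subst j; split=> //.
by rewrite -(ins_blockK k m i_le) e ins_blockK.
Qed.

Lemma stirling_condP s : reflect
  (forall j k l, j < k -> k < l -> l < size s -> nth 0 s j = nth 0 s l -> nth 0 s j < nth 0 s k)
  (stirling_cond s).
Proof.
apply: (iffP forallP) => [h j k l j_k k_l l_lt e|h].
  have j_lt : j < size s by lia.
  have /implyP := forallP (h (Ordinal j_lt)) (Ordinal l_lt).
  rewrite /= e eqxx andbT => /(_ (ltn_trans j_k k_l)) /allP; apply.
  by rewrite mem_iota; lia.
move=> j; apply/forallP => l; apply/implyP => /andP[j_l /eqP e].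
by apply/allP => k; rewrite mem_iota => k_range; apply: (h j k l) => //; lia.
Qed.

(* The block holds the only copies of [m], and [m] exceeds every entry it
   separates from an equal one. *)
Lemma stirling_cond_ins_block m i s : i <= size s -> all (fun v => v < m) s ->
  stirling_cond (ins_block 2 m i s) = stirling_cond s.
Proof.
move=> i_le /allP s_lt_m.
have nth_lt q : q < size s -> nth 0 s q < m by move=> q_lt; apply/s_lt_m/mem_nth.
apply/stirling_condP/stirling_condP => [h j k l j_k k_l l_lt e|h j k l j_k k_l].
  rewrite -!(nth_ins_block_shift 2 m i_le).
  apply: (h (shift_past i 2 j) (shift_past i 2 k) (shift_past i 2 l));
    rewrite ?size_ins_block ?nth_ins_block_shift // /shift_past;
    by repeat case: ifP; lia.
rewrite size_ins_block // !nth_ins_block // => l_lt.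
have := nth_lt j; have := nth_lt (j - 2); have := nth_lt l; have := nth_lt (l - 2).
case: (ltnP j i) => ?; case: (ltnP j (i + 2)) => ?; case: (ltnP k i) => ?;
case: (ltnP k (i + 2)) => ?; case: (ltnP l i) => ?; case: (ltnP l (i + 2)) => ?;
move=> ? ? ? ? e; first [lia | apply: (h _ _ _ _ _ _ e); lia].
Qed.

(** * Left-to-right minima under insertion of a new maximum *)

Definition lrmin_value (w : seq nat) (v : nat) :=
  has (fun q => (nth 0 w q == v) && lrmin_pos w q) (iota 0 (size w)).

Definition num_markable (w : seq nat) := count (fun q => ~~ lrmin_pos w q) (iota 0 (size w)).

Section LrminInsBlock.
Variables (k m i : nat) (s : seq nat).
Hypotheses (k_gt0 : 0 < k) (i_le : i <= size s) (s_lt_m : all (fun v => v < m) s).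
Local Notation t := (ins_block k m i s).

Let nth_lt q : q < size s -> nth 0 s q < m.
Proof. by move=> q_lt; apply: (allP s_lt_m); apply: mem_nth. Qed.

Lemma lrmin_pos_shift q : q < size s -> lrmin_pos t (shift_past i k q) = lrmin_pos s q.
Proof.
move=> q_lt; rewrite /lrmin_pos nth_ins_block_shift //.
apply/allP/allP => h j; rewrite mem_iota => j_range.
  rewrite -(nth_ins_block_shift k m i_le j); apply: h.
  by rewrite mem_iota /shift_past; case: ifP; case: ifP; lia.
rewrite nth_ins_block //; case: (ltnP j i) => j_i.
  by apply: h; rewrite mem_iota; move: j_range; rewrite /shift_past; case: ifP; lia.
case: (ltnP j (i + k)) => j_ik; first exact: nth_lt.
by apply: h; rewrite mem_iota; move: j_range; rewrite /shift_past; case: ifP; lia.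
Qed.

Lemma lrmin_pos_block q : i <= q < i + k -> lrmin_pos t q = (q == 0).
Proof.
move=> q_block; rewrite /lrmin_pos nth_ins_block_inside //.
case: (posnP q) => [->|q_gt0] //; apply/negbTE/negP => /allP /(_ 0).
rewrite mem_iota q_gt0 => /(_ isT); case: (posnP i) => [i0|i_gt0].
  by rewrite nth_ins_block_inside ?ltnn //; lia.
by rewrite nth_ins_block_before //; have := @nth_lt 0; lia.
Qed.

Lemma lrmin_value_ins_block_old v : v \in s -> lrmin_value t v = lrmin_value s v.
Proof.
move=> v_s; have v_lt : v < m by apply: (allP s_lt_m).
apply/hasP/hasP => [[q]|[q]]; rewrite mem_iota ?size_ins_block //.
  move=> /andP[_ q_lt] /andP[/eqP tq_v q_min].
  case: (ins_block_cases i_le q_lt) => [q_block|[p p_lt q_p]].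
    by move: tq_v; rewrite nth_ins_block_inside //; lia.
  exists p; first by rewrite mem_iota.
  by rewrite -(nth_ins_block_shift k m i_le) -q_p tq_v eqxx -lrmin_pos_shift // -q_p.
move=> /andP[_ q_lt] /andP[/eqP sq_v q_min]; exists (shift_past i k q).
  by rewrite mem_iota /shift_past; case: ifP; lia.
by rewrite nth_ins_block_shift // sq_v eqxx lrmin_pos_shift.
Qed.

Lemma lrmin_value_ins_block_new : lrmin_value t m = (i == 0).
Proof.
apply/hasP/idP => [[q]|/eqP i0].
  rewrite mem_iota size_ins_block // => /andP[_ q_lt] /andP[/eqP tq_m q_min].
  case: (ins_block_cases i_le q_lt) => [q_block|[p p_lt q_p]].
    by move: q_min; rewrite lrmin_pos_block // => /eqP q0; lia.
  by move: tq_m; rewrite q_p nth_ins_block_shift //; have := nth_lt p_lt; lia.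
exists 0; first by rewrite mem_iota size_ins_block //; lia.
by rewrite nth_ins_block_inside ?lrmin_pos_block ?eqxx //; lia.
Qed.

Lemma lrmin_ins_block : lrmin t = lrmin s + (i == 0).
Proof.
have m_s : m \notin s by apply/negP => /(allP s_lt_m); rewrite ltnn.
rewrite /lrmin (permP (perm_undup (@mem_ins_block k m i s k_gt0))) /= (negbTE m_s) /=.
rewrite -/(lrmin_value t m) lrmin_value_ins_block_new addnC; congr (_ + _).
by apply: eq_in_count => v; rewrite mem_undup => /lrmin_value_ins_block_old.
Qed.

Lemma num_markable_ins_block : num_markable t = num_markable s + (k - (i == 0)).
Proof.
rewrite /num_markable size_ins_block //.
have -> : size s + k = i + (k + (size s - i)) by lia.
rewrite iotaD iotaD !count_cat -[in RHS](subnKC i_le) iotaD count_cat.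
have before : count (fun q => ~~ lrmin_pos t q) (iota 0 i) =
              count (fun q => ~~ lrmin_pos s q) (iota 0 i).
  apply: eq_in_count => q; rewrite mem_iota => q_i.
  by rewrite -lrmin_pos_shift /shift_past ?ifT //; lia.
have after : count (fun q => ~~ lrmin_pos t q) (iota (0 + i + k) (size s - i)) =
             count (fun q => ~~ lrmin_pos s q) (iota (0 + i) (size s - i)).
  apply: count_iota_shift => q q_range.
  by rewrite -lrmin_pos_shift /shift_past ?ifF //; lia.
have block : count (fun q => ~~ lrmin_pos t q) (iota (0 + i) k) = k - (i == 0).
  rewrite (@eq_in_count _ _ (fun q => q != 0)) => [|q]; last first.
    by rewrite mem_iota => q_block; rewrite lrmin_pos_block //; lia.
  exact: count_iota_neq0.
rewrite before after block; lia.
Qed.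
End LrminInsBlock.

(** * Ascents and plateaux under insertion of a new maximum *)

Definition ascent_at (w : seq nat) (q : nat) := nth 0 w q.-1 < nth 0 w q.

Definition plateau_at (w : seq nat) (q : nat) :=
  (nth 0 w q.-1 < nth 0 w q) && (nth 0 w q == nth 0 w q.+1).

(* Padding the range of positions to any [K > size w] lets a sequence and the
   result of an insertion into it be split at the same indices. *)
Lemma asc_count_iota w K : size w < K -> asc w = count (ascent_at w) (iota 0 K).
Proof.
move=> K_gt; rewrite /asc (@count_iota_window _ 1 (size w).-1 K) //; first lia.
move=> q q_K q_out; rewrite /ascent_at.
case: (posnP q) => [->|q_gt0]; first by rewrite ltnn.
by rewrite [nth 0 w q]nth_default ?ltn0 //; lia.
Qed.

Lemma ap_count_iota w K : all (fun v => 0 < v) w -> size w < K ->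
  ap w = count (plateau_at w) (iota 0 K).
Proof.
move=> /allP w_pos K_gt; rewrite /ap (@count_iota_window _ 1 (size w).-2 K) //; first lia.
move=> q q_K q_out; rewrite /plateau_at.
case: (posnP q) => [->|q_gt0]; first by rewrite ltnn.
case: (ltnP q (size w)) => q_lt; last by rewrite [nth 0 w q]nth_default.
rewrite [nth 0 w q.+1]nth_default; last lia.
have : 0 < nth 0 w q by apply/w_pos/mem_nth.
by case: (nth 0 w q) => //= v _; rewrite andbF.
Qed.

Section AscentsPlateauxInsBlock.
Variables (m : nat) (s : seq nat).
Hypotheses (m_gt0 : 0 < m) (s_lt_m : all (fun v => v < m) s).

Let nth_lt q : nth 0 s q < m.
Proof.
case: (ltnP q (size s)) => q_lt; first exact/(allP s_lt_m)/mem_nth.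
by rewrite nth_default.
Qed.

Let ins_block_pos k i : all (fun v => 0 < v) s -> all (fun v => 0 < v) (ins_block k m i s).
Proof.
by move=> s_pos; rewrite (perm_all _ (perm_ins_block k m i s)) all_cat s_pos all_nseq m_gt0 orbT.
Qed.

Lemma asc_ins_block_head : asc (ins_block 1 m 0 s) = asc s.
Proof.
rewrite (@asc_count_iota _ (size s + 3)) ?size_ins_block //; last lia.
rewrite (@asc_count_iota _ (size s + 2)); last lia.
rewrite (_ : size s + 3 = 2 + (size s).+1); last lia.
rewrite (_ : size s + 2 = 1 + (size s).+1); last lia.
rewrite !iotaD !count_cat.
have -> : count (ascent_at (ins_block 1 m 0 s)) (iota 0 2) = 0.
  have t0 : nth 0 (ins_block 1 m 0 s) 0 = m by apply: nth_ins_block_inside.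
  have t1 : nth 0 (ins_block 1 m 0 s) 1 = nth 0 s 0 by rewrite nth_ins_block_after.
  by rewrite /= /ascent_at /= t0 t1 ltnn (leq_gtF (ltnW (nth_lt 0))).
have -> : count (ascent_at s) (iota 0 1) = 0 by rewrite /= /ascent_at ltnn.
rewrite !add0n; apply: (@count_iota_shift _ _ 1 1) => q q_range.
rewrite /ascent_at !nth_ins_block_after; try lia.
by rewrite addnK; have -> : (q + 1).-1 - 1 = q.-1 by lia.
Qed.

Lemma asc_ins_block i : 0 < i <= size s ->
  asc (ins_block 1 m i s) + ascent_at s i = asc s + 1.
Proof.
move=> /andP[i_gt0 i_le].
rewrite (@asc_count_iota _ (size s + 3)) ?size_ins_block //; last lia.
rewrite (@asc_count_iota _ (size s + 2)); last lia.
rewrite (_ : size s + 3 = i + (2 + (size s + 1 - i))); last lia.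
rewrite (_ : size s + 2 = i + (1 + (size s + 1 - i))); last lia.
rewrite !iotaD !count_cat.
have -> : count (ascent_at (ins_block 1 m i s)) (iota 0 i) = count (ascent_at s) (iota 0 i).
  apply: eq_in_count => q; rewrite mem_iota => q_i.
  by rewrite /ascent_at !nth_ins_block_before //; lia.
have -> : count (ascent_at (ins_block 1 m i s)) (iota (0 + i) 2) = 1.
  have t_pred : nth 0 (ins_block 1 m i s) i.-1 = nth 0 s i.-1.
    by apply: nth_ins_block_before; lia.
  have t_i : nth 0 (ins_block 1 m i s) i = m by apply: nth_ins_block_inside; lia.
  have t_succ : nth 0 (ins_block 1 m i s) i.+1 = nth 0 s i.
    by rewrite nth_ins_block_after ?subn1 //; lia.
  by rewrite add0n /= /ascent_at /= t_pred t_i t_succ nth_lt (leq_gtF (ltnW (nth_lt _))).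
rewrite (_ : 0 + i + 2 = (i + 1) + 1); last lia.
rewrite (_ : 0 + i + 1 = i + 1); last lia.
rewrite (@count_iota_shift _ (ascent_at s)) /= ?add0n; first lia.
move=> q q_range; rewrite /ascent_at !nth_ins_block_after //; try lia.
by rewrite addnK; have -> : (q + 1).-1 - 1 = q.-1 by lia.
Qed.

Lemma ap_ins_block_head : all (fun v => 0 < v) s -> ap (ins_block 2 m 0 s) = ap s.
Proof.
move=> s_pos.
rewrite (@ap_count_iota _ (size s + 4)) ?size_ins_block ?ins_block_pos //; last lia.
rewrite (@ap_count_iota _ (size s + 2)) //; last lia.
rewrite (_ : size s + 4 = 3 + (size s).+1); last lia.
rewrite (_ : size s + 2 = 1 + (size s).+1); last lia.
rewrite !iotaD !count_cat.
have -> : count (plateau_at (ins_block 2 m 0 s)) (iota 0 3) = 0.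
  have t0 : nth 0 (ins_block 2 m 0 s) 0 = m by apply: nth_ins_block_inside.
  have t1 : nth 0 (ins_block 2 m 0 s) 1 = m by apply: nth_ins_block_inside.
  have t2 : nth 0 (ins_block 2 m 0 s) 2 = nth 0 s 0 by rewrite nth_ins_block_after.
  by rewrite /= /plateau_at /= t0 t1 t2 ltnn (leq_gtF (ltnW (nth_lt 0))).
have -> : count (plateau_at s) (iota 0 1) = 0 by rewrite /= /plateau_at ltnn.
rewrite !add0n; apply: (@count_iota_shift _ _ 1 2) => q q_range.
rewrite /plateau_at !nth_ins_block_after; try lia.
rewrite addnK; have -> : (q + 2).-1 - 2 = q.-1 by lia.
by have -> : (q + 2).+1 - 2 = q.+1 by lia.
Qed.

Lemma ap_ins_block i : all (fun v => 0 < v) s -> 0 < i <= size s ->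
  ap (ins_block 2 m i s) + plateau_at s i.-1 + plateau_at s i = ap s + 1.
Proof.
move=> s_pos; case: i => // j /= j_lt.
rewrite (@ap_count_iota _ (size s + 4)) ?size_ins_block ?ins_block_pos //; last lia.
rewrite (@ap_count_iota _ (size s + 2)) //; last lia.
rewrite (_ : size s + 4 = j + (4 + (size s - j))); last lia.
rewrite (_ : size s + 2 = j + (2 + (size s - j))); last lia.
rewrite !iotaD !count_cat.
have -> : count (plateau_at (ins_block 2 m j.+1 s)) (iota 0 j) =
          count (plateau_at s) (iota 0 j).
  apply: eq_in_count => q; rewrite mem_iota => q_j.
  by rewrite /plateau_at !nth_ins_block_before //; lia.
have -> : count (plateau_at (ins_block 2 m j.+1 s)) (iota (0 + j) 4) = 1.
  have t_pred : nth 0 (ins_block 2 m j.+1 s) j.-1 = nth 0 s j.-1.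
    by apply: nth_ins_block_before; lia.
  have t_j : nth 0 (ins_block 2 m j.+1 s) j = nth 0 s j by apply: nth_ins_block_before.
  have t_j1 : nth 0 (ins_block 2 m j.+1 s) j.+1 = m by apply: nth_ins_block_inside; lia.
  have t_j2 : nth 0 (ins_block 2 m j.+1 s) j.+2 = m by apply: nth_ins_block_inside; lia.
  have t_j3 : nth 0 (ins_block 2 m j.+1 s) j.+3 = nth 0 s j.+1.
    by rewrite nth_ins_block_after ?subn2 //; lia.
  have sj_m : (nth 0 s j == m) = false by rewrite ltn_eqF.
  rewrite add0n /= /plateau_at /= t_pred t_j t_j1 t_j2 t_j3 sj_m nth_lt eqxx ltnn.
  by rewrite andbF (leq_gtF (ltnW (nth_lt _))).
rewrite (_ : 0 + j + 4 = (j + 2) + 2); last lia.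
rewrite (_ : 0 + j + 2 = j + 2); last lia.
rewrite (@count_iota_shift _ (plateau_at s)) /= ?add0n; first lia.
move=> q q_range; rewrite /plateau_at !nth_ins_block_after; try lia.
rewrite addnK; have -> : (q + 2).-1 - 2 = q.-1 by lia.
by have -> : (q + 2).+1 - 2 = q.+1 by lia.
Qed.

End AscentsPlateauxInsBlock.

Lemma odd_index_ins_block_other m i s v : v != m ->
  odd (index v (ins_block 2 m i s)) = odd (index v s).
Proof.
move=> v_m; rewrite -{2}(cat_take_drop i s) /ins_block !index_cat.
case: (v \in take i s) => //.
by rewrite mem_nseq /= (negbTE v_m) addnCA [odd (2 + _)]oddD.
Qed.

Lemma even_idx_ins_block n i s : all (fun v => v < n.+1) s -> i <= size s ->
  even_idx n.+1 (ins_block 2 n.+1 i s) = even_idx n s + odd i.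
Proof.
move=> s_lt i_le; have n1_s : n.+1 \notin s by apply/negP => /(allP s_lt); rewrite ltnn.
rewrite /even_idx iota_rcons -cats1 count_cat /= index_ins_block // addn0; congr (_ + _).
apply: eq_in_count => v; rewrite mem_iota => v_range.
by apply: odd_index_ins_block_other; rewrite neq_ltn; lia.
Qed.

Lemma plateau_at_next w q : plateau_at w q && plateau_at w q.+1 = false.
Proof.
apply/negbTE/negP; rewrite /plateau_at /= => /andP[/andP[_ /eqP e] /andP[lt _]].
by rewrite e ltnn in lt.
Qed.

Section SlotsNextToPlateaux.
Variable P : pred nat.
Hypothesis P_next : forall q, P q && P q.+1 = false.

Let or_next q : (P q || P q.+1 : nat) = P q + P q.+1.
Proof. by have := P_next q; case: (P q); case: (P q.+1). Qed.

(* The odd slot [2j+1] borders positions [2j] and [2j+1], the even slot [2j+2]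
   borders [2j+1] and [2j+2]; as [P] never holds at two consecutive positions,
   each slot borders at most one position satisfying [P]. *)
Lemma count_odd_slots_next k :
  count (fun i => (P i.-1 || P i) && odd i) (iota 1 (2 * k)) = count P (iota 0 (2 * k)).
Proof.
elim: k => [|k IH] //; rewrite mulnS addnC iotaD count_cat IH.
rewrite [in RHS]iotaD count_cat !count_iota2.
by rewrite add0n add1n !succnK !oddS oddM /= andbT andbF addn0 or_next.
Qed.

Lemma count_even_slots_next k :
  count (fun i => (P i.-1 || P i) && ~~ odd i) (iota 1 (2 * k)) = count P (iota 1 (2 * k)).
Proof.
elim: k => [|k IH] //; rewrite mulnS addnC iotaD !count_cat IH !count_iota2.
by rewrite add1n !succnK !oddS oddM /= andbT andbF add0n or_next.
Qed.

End SlotsNextToPlateaux.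

(** * Decompositions of Stirling permutations and permutations *)

Lemma multiset2S n : multiset2 n.+1 = multiset2 n ++ nseq 2 n.+1.
Proof. by rewrite /multiset2 iota_rcons -cats1 map_cat flatten_cat. Qed.

Lemma multiset2_range n : all (fun v => 0 < v <= n) (multiset2 n).
Proof.
elim: n => [|n IH] //; rewrite multiset2S all_cat /= leqnn !andbT.
by apply: sub_all IH => v /andP[-> /leqW].
Qed.

Lemma size_multiset2 n : size (multiset2 n) = 2 * n.
Proof. by elim: n => [|n IH] //; rewrite multiset2S size_cat IH size_nseq; lia. Qed.

Lemma mem_stirling_perms n s :
  (s \in stirling_perms n) = perm_eq s (multiset2 n) && stirling_cond s.
Proof. by rewrite mem_filter mem_permutations andbC. Qed.

(* Anything between the two copies of the largest value would exceed it. *)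
Lemma stirling_max_adjacent m t : stirling_cond t -> all (fun v => v <= m) t ->
  count_mem m t = 2 -> nth 0 t (index m t).+1 = m.
Proof.
move=> t_stir t_le t_two.
have m_t : m \in t by rewrite -has_pred1 has_count t_two.
have m_take : m \notin take (index m t) t.
  by rewrite -has_pred1 has_take ?ltnn // has_pred1.
have m_rest : m \in drop (index m t).+1 t.
  have := t_two; rewrite -{1}(cat_take_drop (index m t) t) drop_index // count_cat.
  rewrite (count_memPn m_take) /= eqxx add1n => -[one].
  by rewrite -has_pred1 has_count one.
set i := index m t.
case: (posnP (index m (drop i.+1 t))) => [j0|j_gt0].
  by rewrite -[i.+1]addn0 -j0 -nth_drop nth_index.
have := nth_index 0 m_rest; rewrite nth_drop => t_j.
have j_lt : i.+1 + index m (drop i.+1 t) < size t.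
  by rewrite -ltn_subRL -size_drop index_mem.
have k_l : i.+1 < i.+1 + index m (drop i.+1 t) by rewrite -{1}[i.+1]addn0 ltn_add2l.
move/stirling_condP: t_stir => /(_ i i.+1 _ (ltnSn i) k_l j_lt).
rewrite nth_index // t_j => /(_ erefl) m_lt.
have i1_lt : i.+1 < size t by apply: ltn_trans j_lt.
have : nth 0 t i.+1 <= m by apply/(allP t_le)/mem_nth.
by rewrite leqNgt m_lt.
Qed.

Lemma perm_multiset2_lt n s : perm_eq s (multiset2 n) -> all (fun v => v < n.+1) s.
Proof. by move/perm_all->; apply: sub_all (multiset2_range n) => v /andP[]. Qed.

Lemma perm_multiset2_gt0 n s : perm_eq s (multiset2 n) -> all (fun v => 0 < v) s.
Proof. by move/perm_all->; apply: sub_all (multiset2_range n) => v /andP[]. Qed.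

Lemma ins_block_decomp k m N (base big : seq (seq nat)) : 0 < k ->
  uniq base -> uniq big ->
  (forall s, s \in base -> m \notin s /\ size s = N) ->
  (forall s i, s \in base -> i <= N -> ins_block k m i s \in big) ->
  (forall t, t \in big -> exists2 s, s \in base & exists2 i, i <= N & t = ins_block k m i s) ->
  perm_eq big [seq ins_block k m i s | s <- base, i <- iota 0 N.+1].
Proof.
move=> k_gt0 base_uniq big_uniq base_ok ins_big big_ins.
have mem_slots i : (i \in iota 0 N.+1) = (i <= N) by rewrite mem_iota.
apply: uniq_perm => //.
  apply: allpairs_uniq => //; first exact: iota_uniq.
  move=> [s i] [s' j] si s'j.
  case/allpairsP: si => [[s1 i1] /= [s1_base i1_slot [-> ->]]].
  case/allpairsP: s'j => [[s2 i2] /= [s2_base i2_slot [-> ->]]] /= e.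
  have [m_s1 size_s1] := base_ok _ s1_base; have [m_s2 size_s2] := base_ok _ s2_base.
  rewrite mem_slots -size_s1 in i1_slot; rewrite mem_slots -size_s2 in i2_slot.
  by have [-> ->] := ins_block_inj k_gt0 m_s1 m_s2 i1_slot i2_slot e.
move=> t; apply/idP/allpairsP => [/big_ins[s s_base [i i_le ->]]|].
  by exists (s, i); rewrite mem_slots.
by move=> [[s i] /= [s_base i_slot ->]]; apply: ins_big; rewrite -?mem_slots.
Qed.

Lemma ins_block_cut k m i (t u : seq nat) : perm_eq t (u ++ nseq k m) -> i + k <= size t ->
  (forall q, i <= q < i + k -> nth 0 t q = m) ->
  exists2 s, perm_eq s u & t = ins_block k m i s.
Proof.
move=> t_perm ik_le t_block.
have size_take_i : size (take i t) = i by rewrite size_takel //; lia.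
set s := take i t ++ drop (i + k) t.
have t_ins : t = ins_block k m i s.
  rewrite /ins_block take_size_cat // drop_size_cat //.
  rewrite -{1}(cat_take_drop i t); congr (_ ++ _).
  rewrite -{1}(cat_take_drop k (drop i t)) drop_drop addnC; congr (_ ++ _).
  apply: (@eq_from_nth _ 0) => [|q]; first by rewrite size_takel ?size_nseq // size_drop; lia.
  rewrite size_takel ?size_drop => [q_k|]; last lia.
  by rewrite nth_take // nth_drop nth_nseq q_k; apply: t_block; lia.
exists s => //; rewrite -(perm_cat2r (nseq k m)); apply: perm_trans t_perm.
by rewrite t_ins perm_sym perm_ins_block.
Qed.

Lemma stirling_perms_decomp n : perm_eq (stirling_perms n.+1)
  [seq ins_block 2 n.+1 i s | s <- stirling_perms n, i <- iota 0 (2 * n).+1].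
Proof.
have fresh s : perm_eq s (multiset2 n) -> n.+1 \notin s.
  by move/perm_multiset2_lt/allP => s_lt; apply/negP => /s_lt; rewrite ltnn.
apply: ins_block_decomp => //; try exact/filter_uniq/permutations_uniq.
- move=> s; rewrite mem_stirling_perms => /andP[s_perm _].
  by rewrite fresh // (perm_size s_perm) size_multiset2.
- move=> s i; rewrite !mem_stirling_perms => /andP[s_perm s_stir] i_le.
  have size_s : size s = 2 * n by rewrite (perm_size s_perm) size_multiset2.
  rewrite stirling_cond_ins_block ?size_s ?perm_multiset2_lt // s_stir andbT multiset2S.
  by apply: perm_trans (perm_ins_block _ _ _ _) _; rewrite perm_cat2r.
move=> t; rewrite mem_stirling_perms multiset2S => /andP[t_perm t_stir].
have n1_t : n.+1 \in t by rewrite (perm_mem t_perm) mem_cat mem_nseq eqxx orbT.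
have t_two : count_mem n.+1 t = 2.
  by rewrite (permP t_perm) count_cat (count_memPn (fresh _ (perm_refl _))) /= eqxx.
have t_le : all (fun v => v <= n.+1) t.
  by rewrite (perm_all _ t_perm) -multiset2S; apply: sub_all (multiset2_range _) => v /andP[].
have i_lt := index_mem n.+1 t; rewrite n1_t in i_lt.
have t_next := stirling_max_adjacent t_stir t_le t_two.
have i2_le : index n.+1 t + 2 <= size t.
  rewrite addn2 ltnNge; apply/negP => t_short.
  by move: t_next; rewrite nth_default.
have t_block q : index n.+1 t <= q < index n.+1 t + 2 -> nth 0 t q = n.+1.
  move=> q_block; have [->|->] : q = index n.+1 t \/ q = (index n.+1 t).+1 by lia.
    exact: nth_index.
  exact: t_next.
have [s s_perm t_ins] := ins_block_cut t_perm i2_le t_block.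
have size_s : size s = 2 * n by rewrite (perm_size s_perm) size_multiset2.
have i_le : index n.+1 t <= 2 * n.
  move: i2_le; rewrite (perm_size t_perm) size_cat size_multiset2 size_nseq; lia.
exists s; last by exists (index n.+1 t).
rewrite mem_stirling_perms s_perm -(@stirling_cond_ins_block n.+1 (index n.+1 t)) -?t_ins //.
  by rewrite size_s.
exact: perm_multiset2_lt.
Qed.

Lemma permutations_decomp n : perm_eq (permutations (iota 1 n.+1))
  [seq ins_block 1 n.+1 i s | s <- permutations (iota 1 n), i <- iota 0 n.+1].
Proof.
apply: ins_block_decomp => //; try exact: permutations_uniq.
- move=> s; rewrite mem_permutations => s_perm.
  by rewrite (perm_mem s_perm) (perm_size s_perm) mem_iota size_iota; split=> //; lia.
- move=> s i; rewrite !mem_permutations => s_perm _.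
  rewrite iota_rcons add1n -cats1; apply: perm_trans (perm_ins_block _ _ _ _) _.
  by rewrite perm_cat2r.
move=> t; rewrite mem_permutations iota_rcons add1n -cats1 => t_perm.
have n1_t : n.+1 \in t by rewrite (perm_mem t_perm) mem_cat mem_head orbT.
have i1_le : index n.+1 t + 1 <= size t by rewrite addn1 index_mem.
have t_block q : index n.+1 t <= q < index n.+1 t + 1 -> nth 0 t q = n.+1.
  move=> q_block; have -> : q = index n.+1 t by lia.
  exact: nth_index.
have [s s_perm t_ins] := ins_block_cut (k := 1) t_perm i1_le t_block.
exists s; first by rewrite mem_permutations.
exists (index n.+1 t) => //.
by move: i1_le; rewrite (perm_size t_perm) size_cat size_iota /=; lia.
Qed.

Definition plateau_slot (w : seq nat) (i : nat) := plateau_at w i.-1 || plateau_at w i.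

Lemma count_plateau_slots n s : perm_eq s (multiset2 n) ->
  [/\ count (fun i => plateau_slot s i && odd i) (iota 1 (2 * n)) = ap s,
      count (fun i => plateau_slot s i && ~~ odd i) (iota 1 (2 * n)) = ap s,
      count (fun i => ~~ plateau_slot s i && odd i) (iota 1 (2 * n)) = n - ap s &
      count (fun i => ~~ plateau_slot s i && ~~ odd i) (iota 1 (2 * n)) = n - ap s].
Proof.
move=> s_perm; have size_s : size s = 2 * n by rewrite (perm_size s_perm) size_multiset2.
have s_pos := perm_multiset2_gt0 s_perm.
have odd_ap : count (fun i => plateau_slot s i && odd i) (iota 1 (2 * n)) = ap s.
  rewrite (count_odd_slots_next (plateau_at_next s)) (@ap_count_iota s (2 * n + 1)) //.
    rewrite iotaD count_cat /= /plateau_at.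
    by rewrite [nth 0 s (2 * n)]nth_default ?size_s ?andbF ?addn0.
  by rewrite size_s addn1.
have even_ap : count (fun i => plateau_slot s i && ~~ odd i) (iota 1 (2 * n)) = ap s.
  rewrite (count_even_slots_next (plateau_at_next s)) (@ap_count_iota s (1 + 2 * n)) //.
    by rewrite iotaD count_cat /= /plateau_at ltnn.
  by rewrite size_s add1n.
split=> //.
  by have := count_and_split (plateau_slot s) odd (iota 1 (2 * n)); rewrite count_odd_iota; lia.
have := count_and_split (plateau_slot s) (predC odd) (iota 1 (2 * n)).
have := count_predC odd (iota 1 (2 * n)); rewrite count_odd_iota size_iota /=; lia.
Qed.

(** * The common recursion *)

Section WeightedSums.
Local Open Scope ring_scope.
Variable R : comNzRingType.

Lemma sum_bool_count (r : seq nat) (b : pred nat) (F : bool -> R) :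
  \sum_(i <- r) F (b i) = F true *+ count b r + F false *+ count (predC b) r.
Proof.
elim: r => [|x r IH]; first by rewrite big_nil !mulr0n addr0.
by rewrite big_cons IH /=; case: (b x); rewrite /= ?add0n ?add1n !mulrS; ring.
Qed.

Lemma sum_bool2_count (r : seq nat) (b c : pred nat) (F : bool -> bool -> R) :
  \sum_(i <- r) F (b i) (c i) =
    F true true *+ count (fun i => b i && c i) r
  + F true false *+ count (fun i => b i && ~~ c i) r
  + F false true *+ count (fun i => ~~ b i && c i) r
  + F false false *+ count (fun i => ~~ b i && ~~ c i) r.
Proof.
elim: r => [|x r IH]; first by rewrite big_nil !mulr0n !addr0.
by rewrite big_cons IH /=; case: (b x); case: (c x); rewrite /= ?add0n ?add1n !mulrS; ring.
Qed.

(* [binom_sum c F] is the sum of [F #|M|] over the subsets [M] of a [c]-set. *)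
Definition binom_sum (c : nat) (F : nat -> R) := \sum_(k < c.+1) F k *+ 'C(c, k).

Lemma binom_sumS c F : binom_sum c.+1 F = binom_sum c F + binom_sum c (fun k => F k.+1).
Proof.
rewrite /binom_sum big_ord_recl /= bin0.
under eq_bigr => k _ do rewrite binS mulrnDr.
rewrite big_split /= addrA; congr (_ + _).
rewrite [in RHS]big_ord_recl bin0 [in LHS]big_ord_recr /= bin_small ?ltnSn // mulr0n addr0.
by congr (_ + _); apply: eq_bigr => i _.
Qed.

(* Inserting the new maximum into an object with statistics [(l, a, e)]: one
   slot adds a left-to-right minimum, [2a] slots keep [a] and [2(n - a)] raise
   it, and within each of these two groups half of the slots raise [e]. *)
Definition ins_step n (f : nat -> nat -> nat -> R) l a e :=
  f l.+1 a e + (f l a e + f l a e.+1) *+ a + (f l a.+1 e + f l a.+1 e.+1) *+ (n - a).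

Lemma binom_sum_ins_step n f c l a :
  binom_sum c (ins_step n f l a) = binom_sum c (f l.+1 a)
    + (binom_sum c (f l a) + binom_sum c (fun k => f l a k.+1)) *+ a
    + (binom_sum c (f l a.+1) + binom_sum c (fun k => f l a.+1 k.+1)) *+ (n - a).
Proof.
rewrite /binom_sum !mulrnDl -!sumrMnl -!big_split /=; apply: eq_bigr => k _.
by rewrite /ins_step !mulrnDl -!mulrnA !(mulnC _ 'C(c, k)) !mulrnA; ring.
Qed.

End WeightedSums.

Lemma card_set_ord_count n (P : pred nat) : #|[set i : 'I_n | P i]| = count P (iota 0 n).
Proof.
rewrite -sum1_card -sum1_count (_ : iota 0 n = index_iota 0 n) ?big_mkord; last first.
  by rewrite /index_iota subn0.
by apply: eq_bigl => i; rewrite inE.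
Qed.

Lemma sum_valid_marks (R : comNzRingType) n p (F : nat -> R) : size p = n ->
  (\sum_(M : {set 'I_n} | valid_marks p M) F #|M|)%R = binom_sum (num_markable p) F.
Proof.
move=> size_p; set A := [set i : 'I_n | ~~ lrmin_pos p i].
have card_A : #|A| = num_markable p.
  by rewrite (card_set_ord_count n (fun q => ~~ lrmin_pos p q)) /num_markable size_p.
have valid_sub M : valid_marks p M = (M \subset A).
  by apply/forall_inP/subsetP => M_ok i /M_ok; rewrite inE.
have card_ltA (M : {set 'I_n}) : M \subset A -> #|M| < #|A|.+1.
  by move=> M_A; rewrite ltnS subset_leq_card.
rewrite (eq_bigl _ _ valid_sub) -card_A /binom_sum.
rewrite (partition_big (fun M : {set 'I_n} => inord #|M| : 'I_#|A|.+1) predT) //=.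
apply: eq_bigr => k _; rewrite -cards_draws -sumr_const.
apply: eq_big => [M|M /andP[M_A /eqP <-]]; last by rewrite inordK ?card_ltA.
rewrite inE; case M_A: (M \subset A) => //=.
by apply/eqP/eqP => [<-|->]; rewrite ?inordK ?card_ltA ?inord_val.
Qed.

Section Recursions.
Variable R : comNzRingType.
Implicit Type f : nat -> nat -> nat -> R.

Lemma sum_ins_block_stirling n f s : perm_eq s (multiset2 n) ->
  (\sum_(i <- iota 0 (2 * n).+1)
     f (lrmin (ins_block 2 n.+1 i s)) (ap (ins_block 2 n.+1 i s))
       (even_idx n.+1 (ins_block 2 n.+1 i s)))%R
  = ins_step n f (lrmin s) (ap s) (even_idx n s).
Proof.
move=> s_perm; have size_s : size s = 2 * n by rewrite (perm_size s_perm) size_multiset2.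
have s_lt := perm_multiset2_lt s_perm.
have s_pos := perm_multiset2_gt0 s_perm.
rewrite /= big_cons lrmin_ins_block // ap_ins_block_head // even_idx_ins_block //.
rewrite addn0 addn1.
set l := lrmin s; set a := ap s; set e := even_idx n s.
pose F (b c : bool) := f l (if b then a else a.+1) (e + c).
rewrite (eq_big_seq (fun i => F (plateau_slot s i) (odd i))) => [|i]; last first.
  rewrite mem_iota => /andP[i_gt0 i_lt]; have i_le : i <= size s by lia.
  rewrite /F lrmin_ins_block // even_idx_ins_block // (gtn_eqF i_gt0) addn0.
  congr f; have := @ap_ins_block n.+1 s isT s_lt i s_pos; rewrite i_gt0 i_le => /(_ isT).
  have := plateau_at_next s i.-1; rewrite prednK // /plateau_slot -/a.
  by case: (plateau_at s i.-1); case: (plateau_at s i) => //= _; lia.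
have [odd_ap even_ap odd_nap even_nap] := count_plateau_slots s_perm.
by rewrite sum_bool2_count odd_ap even_ap odd_nap even_nap /F /ins_step addn0 addn1; ring.
Qed.

Lemma sum_ins_block_permutation n f p : perm_eq p (iota 1 n) ->
  (\sum_(i <- iota 0 n.+1) binom_sum (num_markable (ins_block 1 n.+1 i p))
       (f (lrmin (ins_block 1 n.+1 i p)) (asc (ins_block 1 n.+1 i p))))%R
  = binom_sum (num_markable p) (ins_step n f (lrmin p) (asc p)).
Proof.
move=> p_perm; have size_p : size p = n by rewrite (perm_size p_perm) size_iota.
have p_lt : all (fun v => v < n.+1) p.
  by rewrite (perm_all _ p_perm); apply/allP => v; rewrite mem_iota; lia.
rewrite /= big_cons num_markable_ins_block // lrmin_ins_block // asc_ins_block_head //.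
rewrite subnn addn0 addn1.
set l := lrmin p; set a := asc p; set c := num_markable p.
pose F (b : bool) := (binom_sum c (f l (if b then a else a.+1))
                      + binom_sum c (fun k => f l (if b then a else a.+1) k.+1))%R.
rewrite (eq_big_seq (fun i => F (ascent_at p i))) => [|i]; last first.
  rewrite mem_iota => /andP[i_gt0 i_lt]; have i_le : i <= size p by lia.
  rewrite num_markable_ins_block // lrmin_ins_block // (gtn_eqF i_gt0) subn0 addn0 addn1.
  rewrite binom_sumS /F -/l -/c; have := @asc_ins_block n.+1 p isT p_lt i.
  rewrite i_gt0 i_le -/a; case: (ascent_at p i) => /(_ isT) asc_t.
  - by have -> : asc (ins_block 1 n.+1 i p) = a by lia.
  - by have -> : asc (ins_block 1 n.+1 i p) = a.+1 by lia.
have asc_count : count (ascent_at p) (iota 1 n) = a.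
  rewrite /a (@asc_count_iota p (1 + n)); last by rewrite size_p.
  by rewrite iotaD count_cat /= /ascent_at ltnn.
have nasc_count : count (predC (ascent_at p)) (iota 1 n) = n - a.
  by have := count_predC (ascent_at p) (iota 1 n); rewrite size_iota asc_count; lia.
by rewrite sum_bool_count asc_count nasc_count binom_sum_ins_step /F; ring.
Qed.

Definition stirling_weight n f :=
  (\sum_(s <- stirling_perms n) f (lrmin s) (ap s) (even_idx n s))%R.

Definition permutation_weight n f :=
  (\sum_(p <- permutations (iota 1 n)) binom_sum (num_markable p) (f (lrmin p) (asc p)))%R.

Lemma stirling_weightS n f : stirling_weight n.+1 f = stirling_weight n (ins_step n f).
Proof.
rewrite /stirling_weight (perm_big _ (stirling_perms_decomp n)) big_allpairs_dep /=.
apply: eq_big_seq => s; rewrite mem_stirling_perms => /andP[s_perm _].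
exact: sum_ins_block_stirling.
Qed.

Lemma permutation_weightS n f : permutation_weight n.+1 f = permutation_weight n (ins_step n f).
Proof.
rewrite /permutation_weight (perm_big _ (permutations_decomp n)) big_allpairs_dep /=.
apply: eq_big_seq => p; rewrite mem_permutations => p_perm.
exact: sum_ins_block_permutation.
Qed.

Lemma stirling_weight_eq n f : stirling_weight n f = permutation_weight n f.
Proof.
elim: n f => [|n IH] f; last by rewrite stirling_weightS permutation_weightS IH.
rewrite /stirling_weight /permutation_weight.
have -> : stirling_perms 0 = [:: [::]].
  by rewrite /stirling_perms /= ifT //; apply/stirling_condP => j k l _ _; rewrite ltn0.
by rewrite !big_seq1 /binom_sum big_ord1.
Qed.

End Recursions.

Local Open Scope ring_scope.

Theorem theorem1 (R : comNzRingType) (n : nat) (q x y : R) :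
  (1 <= n)%N ->
  \sum_(s <- stirling_perms n) q ^+ lrmin s * x ^+ ap s * y ^+ even_idx n s =
  \sum_(p <- permutations (iota 1 n))
     \sum_(M : {set 'I_n} | valid_marks p M) q ^+ lrmin p * x ^+ asc p * y ^+ #|M|.
Proof.
(* The identity holds for [n = 0] as well. *)
move=> _.
have := stirling_weight_eq n (fun l a e => q ^+ l * x ^+ a * y ^+ e).
rewrite /stirling_weight /permutation_weight => ->.
apply: eq_big_seq => p; rewrite mem_permutations => p_perm.
rewrite (sum_valid_marks (fun k => q ^+ lrmin p * x ^+ asc p * y ^+ k)) //.
by rewrite (perm_size p_perm) size_iota.
Qed.
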